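(* Let $x=(x_1,\dots,x_{|x|})$ and $y=(y_1,\dots,y_{|y|})$ be two finite sequences of strings and let $\lambda\ge 0$. Then the minimum of $\mathrm{error}_\lambda(T)$ over all labeled summary trees $T$ of $\{x,y\}$ equals $\mathsf{EDG}(x,y,\lambda)$, and the tree $T^\ast=\textsc{BuildBifurcation}(x,y,\lambda)$ is an optimal summary tree for $\{x,y\}$ with node cost $\lambda$, with $\mathrm{error}_\lambda(T^\ast)=\mathsf{EDG}(x,y,\lambda)$.
   Context: Strings are over a finite alphabet; $\varepsilon$ is the empty string and $\mathsf{ED}$ is the classical Levenshtein edit distance between strings (unit cost for character insertion, deletion and substitution). A string sequence is a finite list of strings. Asymmetric edit distance: for string sequences $x,y$, $\mathsf{AED}(x,y)$ is the minimum cost of transforming $x$ into $y$ using only the operations (i) inserting a string $w$ into $x$, costing $\mathsf{ED}(w,\varepsilon)$, and (ii) substituting a string $w$ of $x$ by $w'$, costing $\mathsf{ED}(w,w')$; no string of $x$ may be deleted (so $\mathsf{AED}(x,y)$ is defined only when $|x|\le|y|$). Labeled summary tree of a set $X$ of string sequences: a rooted tree $T$ whose root is a special sentinel node and whose other nodes are each labeled by a string, together with a map $f$ assigning to each $x\in X$ a node $v_x$ of $T$. $L_T(v)$ denotes the sequence of labels on the path from the root (excluding the sentinel) to $v$; $|T|$ is the number of non-sentinel nodes. For $\lambda\ge0$, $\mathrm{error}_\lambda(T)=\sum_{x\in X}\mathsf{AED}(x,L_T(v_x))+\lambda|T|$, where the tree must satisfy $|x|\le|L_T(v_x)|$ for every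 $x$ (so that each $\mathsf{AED}$ is defined). An optimal summary tree minimizes $\mathrm{error}_\lambda$. Edit distance with give-up: for sequences $x,y$ (1-indexed), define $\mathsf{EDG}(i,j,\lambda)$ for $1\le i\le|x|+1$, $1\le j\le|y|+1$ by $\mathsf{EDG}(|x|+1,|y|+1,\lambda)=0$, $\mathsf{EDG}(i,|y|+1,\lambda)=\lambda(|x|-i+1)$, $\mathsf{EDG}(|x|+1,j,\lambda)=\lambda(|y|-j+1)$, and otherwise $\mathsf{EDG}(i,j,\lambda)$ is the minimum of: $\mathsf{EDG}(i+1,j+1,\lambda)+\lambda+\mathsf{ED}(x_i,y_j)$ (substitution); $\mathsf{EDG}(i,j+1,\lambda)+\lambda+\mathsf{ED}(\varepsilon,y_j)$ (insertion); $\mathsf{EDG}(i+1,j,\lambda)+\lambda+\mathsf{ED}(x_i,\varepsilon)$ (deletion); $\lambda(|x|-i+1)+\lambda(|y|-j+1)$ (give up). Set $\mathsf{EDG}(x,y,\lambda)=\mathsf{EDG}(1,1,\lambda)$. $\textsc{BuildBifurcation}(x,y,\lambda)$ is the tree built recursively along an optimal choice in this recurrence: if both sequences are empty, the empty tree (just the sentinel); if the chosen option is insertion of $y_1$ (or $x$ is empty), a root-child node labeled $y_1$ with subtree $\textsc{BuildBifurcation}(x,y_{2..|y|},\lambda)$ below it; if deletion of $x_1$ (or $y$ is empty), a node labeled $x_1$ with subtree $\textsc{BuildBifurcation}(x_{2..|x|},y,\lambda)$; if substitution, a node labeled $x_1$ with subtree $\textsc{BuildBifurcation}(x_{2..|x|},y_{2..|y|},\lambda)$;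 if give up, two disjoint paths below the current root, labeled successively by the remaining strings of $x$ and of $y$ respectively. Whenever the node corresponding to the last string $x_{|x|}$ (resp. $y_{|y|}$) is placed, $x$ (resp. $y$) is mapped to that node. *)

From HB Require Import structures.
From mathcomp Require Import all_boot all_order all_algebra.
From mathcomp Require Import boolp.
Set Implicit Arguments. Unset Strict Implicit. Unset Printing Implicit Defensive.
Import Order.TTheory GRing.Theory Num.Theory.
Local Open Scope ring_scope.

Section SummaryTrees.
Variable A : finType.
Local Notation string := (seq A).
Local Notation sseq := (seq string).

Fixpoint ED (s t : string) : nat :=
  match s with
  | [::] => size t
  | a :: s' =>
    let fix EDs (t : string) : nat :=
      match t with
      | [::] => size s
      | b :: t' => minn (ED s' t' + (a != b))%N
                        (minn (EDs t').+1 (ED s' (b :: t')).+1)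
      end in EDs t
  end.

Inductive aed_step : sseq -> sseq -> nat -> Prop :=
| aed_ins (s : sseq) (i : nat) (w : string) :
    (i <= size s)%N ->
    aed_step s (take i s ++ w :: drop i s) (ED w [::])
| aed_sub (s : sseq) (i : nat) (w' : string) :
    (i < size s)%N ->
    aed_step s (set_nth [::] s i w') (ED (nth [::] s i) w').

Inductive aed_reach : sseq -> sseq -> nat -> Prop :=
| aed_refl (s : sseq) : aed_reach s s 0
| aed_trans (s u t : sseq) (c1 c2 : nat) :
    aed_step s u c1 -> aed_reach u t c2 -> aed_reach s t (c1 + c2)%N.

(* AED x y = minimum cost of a transformation of x into y
   (meaningful when size x <= size y; set to 0 when no transformation exists). *)
Definition aed_cost (x y : sseq) : pred nat := fun c => `[< aed_reach x y c >].

Definition AED (x y : sseq) : nat :=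
  match pselect (exists c, aed_cost x y c) with
  | left H => ex_minn H
  | right _ => 0%N
  end.

Inductive ltree := LNode of string & seq ltree.

Definition label (t : ltree) : string := let: LNode w _ := t in w.
Definition children (t : ltree) : seq ltree := let: LNode _ ch := t in ch.

(* A tree with a sentinel root is represented by the forest of the children of
   the sentinel.  Nodes are addressed by paths (lists of child indices) from the
   sentinel; the empty path is the sentinel itself.  [labels_at F v] is
   [Some L_T(v)] when v is a node of the tree, and [None] otherwise. *)
Fixpoint labels_at (F : seq ltree) (v : seq nat) : option sseq :=
  match v with
  | [::] => Some [::]
  | i :: v' =>
    match onth F i with
    | None => None
    | Some t => omap (cons (label t)) (labels_at (children t) v')
    end
  end.

Definition L_T (F : seq ltree) (v : seq nat) : sseq := odflt [::] (labels_at F v).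

Fixpoint tsize (t : ltree) : nat :=
  let: LNode _ ch := t in (sumn (map tsize ch)).+1.

Definition tree_size (F : seq ltree) : nat := sumn (map tsize F).

(* A labeled summary tree of {x, y}: forest F (children of the sentinel) with
   nodes vx, vy assigned to x and y, such that each AED is defined. *)
Definition summary_tree_of (x y : sseq) (F : seq ltree) (vx vy : seq nat) :=
  exists Lx Ly, [/\ labels_at F vx = Some Lx, labels_at F vy = Some Ly,
                    (size x <= size Lx)%N & (size y <= size Ly)%N].

Variable R : realFieldType.

Definition error (lam : R) (x y : sseq) (F : seq ltree) (vx vy : seq nat) : R :=
  (AED x (L_T F vx))%:R + (AED y (L_T F vy))%:R + lam * (tree_size F)%:R.

(* EDG on suffixes: EDG x y computes EDG(i,j,lam) of the paper where x, y are
   the suffixes x_{i..|x|}, y_{j..|y|}; size x = |x| - i + 1. *)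
Fixpoint EDG (lam : R) (x y : sseq) : R :=
  match x with
  | [::] => lam * (size y)%:R
  | a :: x' =>
    let fix EDGx (y : sseq) : R :=
      match y with
      | [::] => lam * (size x)%:R
      | b :: y' =>
        Order.min
          (Order.min (EDG lam x' y' + lam + (ED a b)%:R)
                     (EDGx y' + lam + (ED [::] b)%:R))
          (Order.min (EDG lam x' (b :: y') + lam + (ED a [::])%:R)
                     (lam * (size x)%:R + lam * (size y)%:R))
      end in EDGx y
  end.

Fixpoint chain (a : string) (s : sseq) : ltree :=
  LNode a (if s is b :: s' then [:: chain b s'] else [::]).

(* [Bif lam x y F vx vy]: (F, vx, vy) is a possible output of
   BuildBifurcation(x, y, lam), for ANY optimal choice made at each step
   (ties are resolved arbitrarily).  Paths vx, vy are relative to the current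
   root; an exhausted sequence is mapped to the current root, i.e. to the node
   where its last string was placed (or the sentinel at top level). *)
Inductive Bif (lam : R) : sseq -> sseq -> seq ltree -> seq nat -> seq nat -> Prop :=
| Bif_nil : Bif lam [::] [::] [::] [::] [::]
| Bif_xnil (b : string) (y : sseq) F vx vy :
    Bif lam [::] y F vx vy ->
    Bif lam [::] (b :: y) [:: LNode b F] [::] (0%N :: vy)
| Bif_ynil (a : string) (x : sseq) F vx vy :
    Bif lam x [::] F vx vy ->
    Bif lam (a :: x) [::] [:: LNode a F] (0%N :: vx) [::]
| Bif_sub a b x y F vx vy :
    EDG lam (a :: x) (b :: y) = EDG lam x y + lam + (ED a b)%:R ->
    Bif lam x y F vx vy ->
    Bif lam (a :: x) (b :: y) [:: LNode a F] (0%N :: vx) (0%N :: vy)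
| Bif_ins a b x y F vx vy :
    EDG lam (a :: x) (b :: y) = EDG lam (a :: x) y + lam + (ED [::] b)%:R ->
    Bif lam (a :: x) y F vx vy ->
    Bif lam (a :: x) (b :: y) [:: LNode b F] (0%N :: vx) (0%N :: vy)
| Bif_del a b x y F vx vy :
    EDG lam (a :: x) (b :: y) = EDG lam x (b :: y) + lam + (ED a [::])%:R ->
    Bif lam x (b :: y) F vx vy ->
    Bif lam (a :: x) (b :: y) [:: LNode a F] (0%N :: vx) (0%N :: vy)
| Bif_giveup a b x y :
    EDG lam (a :: x) (b :: y) =
      lam * (size (a :: x))%:R + lam * (size (b :: y))%:R ->
    Bif lam (a :: x) (b :: y) [:: chain a x; chain b y]
        (0%N :: nseq (size x) 0%N) (1%N :: nseq (size y) 0%N).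

End SummaryTrees.

(* Lower bound: the root paths of v_x and v_y share a prefix P and then run
   through disjoint subtrees S_x and S_y, so |T| >= |P| + |S_x| + |S_y|.
   AED is bounded below by an alignment recurrence [align] that reads the
   target from its head.  Walking down P, each label either absorbs the next
   string of x and/or of y, which is paid for by a substitution, insertion or
   deletion step of EDG thanks to the triangle inequality for ED, or is an
   inserted string; once P is exhausted, the give-up option of EDG is paid for
   by S_x and S_y.
   Upper bound: each step of BuildBifurcation adds one node and pays exactly
   the term of the EDG recurrence that it follows. *)

From HB Require Import structures.
From mathcomp Require Import all_boot all_order all_algebra.
From mathcomp Require Import boolp.
From mathcomp Require Import zify lra.
Set Implicit Arguments. Unset Strict Implicit. Unset Printing Implicit Defensive.
Import Order.TTheory GRing.Theory Num.Theory.

Section EditDistance.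
Variable A : finType.
Implicit Types (a b c : A) (s t u : seq A).

Lemma ED_nil_l t : ED [::] t = size t. Proof. by []. Qed.

Lemma ED_nil_r s : ED s [::] = size s. Proof. by case: s. Qed.

Lemma ED_cons a b s t :
  ED (a :: s) (b :: t) =
  minn (ED s t + (a != b)) (minn (ED (a :: s) t).+1 (ED s (b :: t)).+1).
Proof. by []. Qed.

Lemma ED_refl s : ED s s = 0.
Proof. by elim: s => [|a s IHs] //; rewrite ED_cons IHs eqxx; lia. Qed.

Lemma ED_sym s t : ED s t = ED t s.
Proof.
elim: s t => [|a s IHs] t; first by rewrite ED_nil_r.
elim: t => [|b t IHt]; first by rewrite ED_nil_r.
by rewrite !ED_cons IHt !IHs [b == a]eq_sym; lia.
Qed.

Lemma size_subn_le_ED s t : size t - size s <= ED s t.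
Proof.
elim: s t => [|a s IHs] t; first by rewrite subn0.
elim: t => [|b t IHt] //; rewrite ED_cons.
by have := IHs t; have := IHs (b :: t); rewrite /= in IHt *; lia.
Qed.

Lemma ED_le_sizeD s t : ED s t <= size s + size t.
Proof.
elim: s t => [|a s IHs] [|b t] //; first by rewrite ED_nil_r addn0.
by rewrite ED_cons /=; have := IHs t; lia.
Qed.

(* Strong induction on [size s + size t + size u]: when the three strings are
   non-empty, each of the nine combinations of first edit steps of [ED s t]
   and [ED t u] is dominated by an option of the recurrence for [ED s u]. *)
Lemma ED_triangle s t u : ED s u <= ED s t + ED t u.
Proof.
move: {2}(size s + size t + size u) (leqnn (size s + size t + size u)) => n.
elim: n s t u => [|n IH] [|a s] [|b t] [|c u] le_n //; rewrite ?ED_nil_l ?ED_nil_r.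
- by have := size_subn_le_ED (b :: t) (c :: u); lia.
- exact: leq_addr.
- by have := ED_le_sizeD (a :: s) (c :: u); lia.
- by have := size_subn_le_ED (b :: t) (a :: s); rewrite ED_sym; lia.
have neq_trans : (a != c) <= (a != b) + (b != c).
  by case: (eqVneq a b) => [->|] //; case: (a != c).
have := IH s t u; have := IH (a :: s) (b :: t) u; have := IH s (b :: t) (c :: u).
have := IH (a :: s) t u; have := IH (a :: s) t (c :: u); have := IH s t (c :: u).
rewrite !ED_cons /= in le_n *; lia.
Qed.

End EditDistance.

Section AsymmetricEditDistance.
Variable A : finType.
Local Notation sseq := (seq (seq A)).
Implicit Types (a b p w : seq A) (s t u x y L : sseq).

Lemma size_insert s i w : size (take i s ++ w :: drop i s) = (size s).+1.
Proof. by rewrite size_cat /= addnS -size_cat cat_take_drop. Qed.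

Lemma aed_step_size s t c : aed_step s t c -> size s <= size t.
Proof.
by case=> [{}s i {}w _|{}s i {}w _]; rewrite ?size_insert ?size_set_nth ?leq_maxr.
Qed.

Lemma aed_reach_size s t c : aed_reach s t c -> size s <= size t.
Proof.
by elim=> {s t c} // s u t c1 c2 /aed_step_size le_su _ /(leq_trans le_su).
Qed.

Lemma aed_reach_step s t c : aed_step s t c -> aed_reach s t c.
Proof. by move=> st; rewrite -[c]addn0; exact: aed_trans st (aed_refl _). Qed.

Lemma aed_reach_trans s u t c1 c2 :
  aed_reach s u c1 -> aed_reach u t c2 -> aed_reach s t (c1 + c2).
Proof.
elim=> {s u c1} // s v u d1 d2 sv _ IH /IH vt.
by rewrite -addnA; apply: aed_trans sv vt.
Qed.

Lemma aed_step_cons a s t c : aed_step s t c -> aed_step (a :: s) (a :: t) c.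
Proof.
case=> [{}s i {}w lei|{}s i {}w lti].
  exact: (@aed_ins _ (a :: s) i.+1 w lei).
exact: (@aed_sub _ (a :: s) i.+1 w lti).
Qed.

Lemma aed_reach_cons a s t c : aed_reach s t c -> aed_reach (a :: s) (a :: t) c.
Proof.
elim=> {s t c} [s|s u t c1 c2 su _ IH]; first exact: aed_refl.
exact: aed_trans (aed_step_cons a su) IH.
Qed.

Lemma aed_reach_ins_head w s : aed_reach s (w :: s) (ED w [::]).
Proof.
by apply: aed_reach_step; have := @aed_ins _ s 0 w (leq0n _); rewrite take0 drop0.
Qed.

Lemma aed_reach_sub_head a w s : aed_reach (a :: s) (w :: s) (ED a w).
Proof. exact: aed_reach_step (@aed_sub _ (a :: s) 0 w isT). Qed.

Lemma aed_reach_exists x L : size x <= size L -> exists c, aed_reach x L c.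
Proof.
elim: L x => [|p L IHL] [|a x] // => [_|_|le_xL]; first by exists 0; apply: aed_refl.
  have [c xL] := IHL [::] isT.
  by exists (c + ED p [::]); apply: aed_reach_trans xL (aed_reach_ins_head _ _).
have [c xL] := IHL x le_xL.
exists (c + ED a p).
exact: aed_reach_trans (aed_reach_cons a xL) (aed_reach_sub_head _ _ _).
Qed.

Lemma AED_min x L c : aed_reach x L c -> AED x L <= c.
Proof.
move=> xL; rewrite /AED; case: pselect => [ex|nex].
  by case: ex_minnP => m _; apply; apply/asboolP.
by case: nex; exists c; apply/asboolP.
Qed.

Lemma AED_reach x L : size x <= size L -> aed_reach x L (AED x L).
Proof.
move=> le_xL; rewrite /AED; case: pselect => [ex|nex].
  by case: ex_minnP => m /asboolP.
by case: nex; have [c xL] := aed_reach_exists le_xL; exists c; apply/asboolP.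
Qed.

Lemma AED_refl x : AED x x = 0.
Proof. by apply/eqP; rewrite -leqn0; apply: AED_min (aed_refl _). Qed.

Lemma AED_cons a x L : size x <= size L -> AED (a :: x) (a :: L) <= AED x L.
Proof. by move=> le_xL; apply/AED_min/aed_reach_cons/AED_reach. Qed.

Lemma AED_cons_sub a b y L :
  size y <= size L -> AED (b :: y) (a :: L) <= ED a b + AED y L.
Proof.
move=> le_yL; apply: AED_min; rewrite ED_sym.
exact: aed_reach_trans (aed_reach_sub_head _ _ _) (aed_reach_cons _ (AED_reach le_yL)).
Qed.

Lemma AED_cons_ins b x L :
  size x <= size L -> AED x (b :: L) <= AED x L + size b.
Proof.
move=> le_xL; apply: AED_min; rewrite -(ED_nil_r b).
exact: aed_reach_trans (AED_reach le_xL) (aed_reach_ins_head _ _).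
Qed.

End AsymmetricEditDistance.

Section Alignment.
Variable A : finType.
Local Notation sseq := (seq (seq A)).
Implicit Types (a b p w : seq A) (s t x y L : sseq).

(* Unlike [AED], it recurses on the head of [t]. *)
Fixpoint align s t : nat :=
  match t, s with
  | [::], _ => 0
  | p :: t', [::] => size p + align [::] t'
  | p :: t', a :: s' =>
    if size s' < size t' then minn (ED a p + align s' t') (size p + align s t')
    else ED a p + align s' t'
  end.

Lemma align_refl t : align t t = 0.
Proof. by elim: t => [|p t IHt] //=; rewrite ltnn ED_refl IHt. Qed.

Lemma align_cons_ins s p t :
  size s <= size t -> align s (p :: t) <= size p + align s t.
Proof. by case: s => [|a s] //= ->; apply: geq_minr. Qed.

Lemma align_set_nth t s i w :
  i < size s -> align s t <= ED (nth [::] s i) w + align (set_nth [::] s i w) t.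
Proof.
elim: t s i => [|p t IHt] [|a s] [|i] //= lt_is.
  have := ED_triangle a w p; have := IHt (a :: s) 0 isT.
  by case: ifP => _ /=; lia.
have size_set : size (set_nth [::] s i w) = size s by rewrite size_set_nth; apply/maxn_idPr.
have := IHt s i lt_is; have := IHt (a :: s) i.+1 lt_is.
by rewrite /= size_set; case: ifP => _; lia.
Qed.

Lemma align_insert t s i w : i <= size s -> size s < size t ->
  align s t <= ED w [::] + align (take i s ++ w :: drop i s) t.
Proof.
elim: t s i => [|p t IHt] s [|i] // le_is lt_st.
  rewrite take0 drop0 [align (w :: s) _]/= ED_nil_r.
  have := align_cons_ins p lt_st; have := ED_triangle p w [::].
  rewrite [ED p w]ED_sym !ED_nil_r; case: ifP => [lt_st'|_]; last by lia.
  by have := IHt s 0 (leq0n _) lt_st'; rewrite take0 drop0 cat0s ED_nil_r; lia.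
case: s le_is lt_st => [|a s] //= le_is lt_st.
rewrite ltnS in lt_st; rewrite size_insert lt_st; have := IHt s i le_is lt_st.
case: ifP => [lt_st'|_]; last by lia.
by have := IHt (a :: s) i.+1 le_is lt_st'; rewrite /=; lia.
Qed.

Lemma align_le_reach s t c : aed_reach s t c -> align s t <= c.
Proof.
elim=> {s t c} [s|s u t c1 c2 su ut IH]; first by rewrite align_refl.
have le_ut := aed_reach_size ut.
case: su le_ut IH => {}s i w hi; last by have := align_set_nth t w hi; lia.
rewrite size_insert => lt_st.
by have := align_insert w hi lt_st; lia.
Qed.

Lemma align_le_AED x L : size x <= size L -> align x L <= AED x L.
Proof. by move=> le_xL; apply/align_le_reach/AED_reach. Qed.

Lemma align_cons a p x L : size x <= size L ->
  align (a :: x) (p :: L) = ED a p + align x L \/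
  align (a :: x) (p :: L) = size p + align (a :: x) L /\ size x < size L.
Proof.
rewrite /=; case: ifP => [lt_xL|_] _; last by left.
by case: (leqP (ED a p + align x L) (size p + align (a :: x) L)); [left | right].
Qed.

End Alignment.

Section SummaryTreePaths.
Variable A : finType.
Implicit Types (F : seq (ltree A)) (t : ltree A) (v : seq nat).

Lemma tree_size_cons t F :
  tree_size (t :: F) = (tree_size (children t)).+1 + tree_size F.
Proof. by case: t. Qed.

Lemma onth_tree_size F i t :
  onth F i = Some t -> (tree_size (children t)).+1 <= tree_size F.
Proof.
elim: F i => [|t0 F IHF] [|i] //=; rewrite tree_size_cons; first by case=> ->; apply: leq_addr.
by move/IHF; lia.
Qed.

Lemma onth2_tree_size F i j t t' : i != j ->
  onth F i = Some t -> onth F j = Some t' ->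
  (tree_size (children t)).+1 + (tree_size (children t')).+1 <= tree_size F.
Proof.
elim: F i j => [|t0 F IHF] [|i] [|j] //=; rewrite tree_size_cons.
- by move=> _ [<-] /onth_tree_size; lia.
- by move=> _ /onth_tree_size le [<-]; lia.
- by move=> ne_ij Fi Fj; have := IHF i j ne_ij Fi Fj; lia.
Qed.

Lemma labels_at_size F v L : labels_at F v = Some L -> size L <= tree_size F.
Proof.
elim: v F L => [|i v IHv] F L /=; first by case=> <-.
case Fi: (onth F i) => [t|] //; case Lt: (labels_at _ v) => [L'|] //= [<-].
by have := IHv _ _ Lt; have := onth_tree_size Fi; rewrite /=; lia.
Qed.

Lemma labels_at_common_prefix F vx vy Lx Ly :
  labels_at F vx = Some Lx -> labels_at F vy = Some Ly ->
  exists P Sx Sy, [/\ Lx = P ++ Sx, Ly = P ++ Sy &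
                      size P + size Sx + size Sy <= tree_size F].
Proof.
elim: vx F vy Lx Ly => [|i vx IHvx] F vy Lx Ly /=.
  by case=> <- /labels_at_size le; exists [::], [::], Ly.
case Fi: (onth F i) => [t|] //; case Lt: (labels_at _ vx) => [Lx'|] //= [<-].
have le_x := labels_at_size Lt; have le_t := onth_tree_size Fi.
case: vy => [|j vy] /=.
  by case=> <-; exists [::], (label t :: Lx'), [::]; split=> //=; lia.
case Fj: (onth F j) => [t'|] //; case Lt': (labels_at _ vy) => [Ly'|] //= [<-].
have le_y := labels_at_size Lt'; have le_t' := onth_tree_size Fj.
case: (eqVneq i j) => [eq_ij|ne_ij].
  move: Fj Lt'; rewrite -eq_ij Fi => -[<-] Lt'.
  have [P [Sx [Sy [-> -> le_P]]]] := IHvx _ _ _ _ Lt Lt'.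
  by exists (label t :: P), Sx, Sy; split=> //=; lia.
exists [::], (label t :: Lx'), (label t' :: Ly'); split=> //=.
by have := onth2_tree_size ne_ij Fi Fj; lia.
Qed.

End SummaryTreePaths.

Lemma min4_cases d (T : orderType d) (u v w z : T) :
  let m := Order.min (Order.min u v) (Order.min w z) in
  [\/ m = u, m = v, m = w | m = z].
Proof.
case: (leP u v) => _; case: (leP w z) => _; case: leP => _;
  by [constructor 1 | constructor 2 | constructor 3 | constructor 4].
Qed.

Local Open Scope ring_scope.

Lemma mulr_natS (R : pzSemiRingType) (x : R) n : x * n.+1%:R = x * n%:R + x.
Proof. by rewrite !mulr_natr mulrSr. Qed.

Section EditDistanceWithGiveUp.
Variables (A : finType) (R : realFieldType) (lam : R).
Local Notation sseq := (seq (seq A)).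
Implicit Types (a b p : seq A) (x y P Sx Sy : sseq).

Lemma EDG_nil_l y : EDG lam [::] y = lam * (size y)%:R.
Proof. by []. Qed.

Lemma EDG_nil_r x : EDG lam x [::] = lam * (size x)%:R.
Proof. by case: x. Qed.

Lemma EDG_cons a b x y :
  EDG lam (a :: x) (b :: y) =
  Order.min (Order.min (EDG lam x y + lam + (ED a b)%:R)
                       (EDG lam (a :: x) y + lam + (ED [::] b)%:R))
            (Order.min (EDG lam x (b :: y) + lam + (ED a [::])%:R)
                       (lam * (size (a :: x))%:R + lam * (size (b :: y))%:R)).
Proof. by []. Qed.

Lemma EDG_cons_le a b x y :
  [/\ EDG lam (a :: x) (b :: y) <= EDG lam x y + lam + (ED a b)%:R,
      EDG lam (a :: x) (b :: y) <= EDG lam (a :: x) y + lam + (ED [::] b)%:R,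
      EDG lam (a :: x) (b :: y) <= EDG lam x (b :: y) + lam + (ED a [::])%:R &
      EDG lam (a :: x) (b :: y) <= lam * (size (a :: x))%:R + lam * (size (b :: y))%:R].
Proof. by rewrite EDG_cons !ge_min !lexx !orbT. Qed.

Lemma EDG_le_giveup x y : EDG lam x y <= lam * (size x)%:R + lam * (size y)%:R.
Proof.
case: x => [|a x]; first by rewrite EDG_nil_l mulr0 add0r.
case: y => [|b y]; first by rewrite EDG_nil_r mulr0 addr0.
by case: (EDG_cons_le a b x y).
Qed.

Lemma EDG_cons_cases a b x y :
  let e := EDG lam (a :: x) (b :: y) in
  [\/ e = EDG lam x y + lam + (ED a b)%:R,
      e = EDG lam (a :: x) y + lam + (ED [::] b)%:R,
      e = EDG lam x (b :: y) + lam + (ED a [::])%:R |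
      e = lam * (size (a :: x))%:R + lam * (size (b :: y))%:R].
Proof.
by move=> e; rewrite {}/e EDG_cons; apply: min4_cases.
Qed.

Hypothesis lam_ge0 : 0 <= lam.

Lemma ler_lam_nat m n : (m <= n)%N -> lam * m%:R <= lam * n%:R.
Proof. by move=> le_mn; rewrite ler_wpM2l // ler_nat. Qed.

Lemma EDG_le_align P Sx Sy x y :
  (size x <= size (P ++ Sx))%N -> (size y <= size (P ++ Sy))%N ->
  EDG lam x y <= (align x (P ++ Sx))%:R + (align y (P ++ Sy))%:R
                 + lam * (size P + size Sx + size Sy)%:R.
Proof.
have align_ge0 (s t : sseq) : 0 <= (align s t)%:R :> R by apply: ler0n.
elim: P x y => [|p P IHP] x y le_x le_y.
  rewrite /= add0n.
  have := ler_lam_nat (leq_add le_x le_y); rewrite !natrD !mulrDr.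
  by have := EDG_le_giveup x y; have := align_ge0 x Sx; have := align_ge0 y Sy; lra.
case: x le_x => [|a x] le_x.
  have le_y' : (size y <= size (p :: P) + size Sx + size Sy)%N.
    by rewrite /= size_cat in le_y *; lia.
  rewrite EDG_nil_l; have := ler_lam_nat le_y'.
  by have := align_ge0 [::] (p :: P ++ Sx); have := align_ge0 y (p :: P ++ Sy); lra.
case: y le_y => [|b y] le_y.
  have le_x' : (size (a :: x) <= size (p :: P) + size Sx + size Sy)%N.
    by rewrite /= size_cat in le_x *; lia.
  rewrite EDG_nil_r; have := ler_lam_nat le_x'.
  by have := align_ge0 (a :: x) (p :: P ++ Sx); have := align_ge0 [::] (p :: P ++ Sy); lra.
rewrite /= in le_x le_y; rewrite !cat_cons.
have ->: lam * (size (p :: P) + size Sx + size Sy)%:R =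
         lam * (size P + size Sx + size Sy)%:R + lam.
  by rewrite !addSn mulr_natS.
have tri_sub : (ED a b)%:R <= (ED a p)%:R + (ED b p)%:R :> R.
  by rewrite -natrD ler_nat -[ED b p]ED_sym ED_triangle.
have tri_del : (ED a [::])%:R <= (ED a p)%:R + (size p)%:R :> R.
  by rewrite -natrD ler_nat -[size p]ED_nil_r ED_triangle.
have tri_ins : (ED [::] b)%:R <= (ED b p)%:R + (size p)%:R :> R.
  by rewrite -natrD ler_nat -[size p]ED_nil_r ED_sym ED_triangle.
have [le_sub le_ins le_del _] := EDG_cons_le a b x y.
case: (align_cons a p le_x) => [-> | [-> lt_x]];
  case: (align_cons b p le_y) => [-> | [-> lt_y]].
- by have := IHP x y le_x le_y; rewrite !natrD; lra.
- by have := IHP x (b :: y) le_x lt_y; rewrite !natrD; lra.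
- by have := IHP (a :: x) y lt_x le_y; rewrite !natrD; lra.
- have := IHP (a :: x) (b :: y) lt_x lt_y.
  by have := lam_ge0; have := ler0n R (size p); rewrite !natrD; lra.
Qed.

Lemma EDG_le_error x y F vx vy :
  summary_tree_of x y F vx vy -> EDG lam x y <= error lam x y F vx vy.
Proof.
case=> Lx [Ly [Fx Fy le_x le_y]]; rewrite /error /L_T Fx Fy /=.
have [P [Sx [Sy [eLx eLy le_T]]]] := labels_at_common_prefix Fx Fy.
have := align_le_AED le_x; have := align_le_AED le_y; rewrite -!(ler_nat R).
have := ler_lam_nat le_T; rewrite {}eLx {}eLy in le_x le_y *.
by have := EDG_le_align le_x le_y; lra.
Qed.

End EditDistanceWithGiveUp.

Section BuildBifurcation.
Variables (A : finType) (R : realFieldType) (lam : R).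
Local Notation sseq := (seq (seq A)).
Implicit Types (a b : seq A) (x y : sseq) (F : seq (ltree A)) (vx vy : seq nat).

Lemma Bif_exists x y : exists F vx vy, Bif lam x y F vx vy.
Proof.
move: {2}(size x + size y)%N (leqnn (size x + size y)) => n.
elim: n x y => [|n IHn] [|a x] [|b y] //= le_n;
  try by exists [::], [::], [::]; apply: Bif_nil.
- have [F [vx [vy B]]] := IHn [::] y le_n.
  by exists [:: LNode b F], [::], (0%N :: vy); apply: Bif_xnil B.
- have [F [vx [vy B]]] : exists F vx vy, Bif lam x [::] F vx vy.
    by apply: IHn => /=; lia.
  by exists [:: LNode a F], (0%N :: vx), [::]; apply: Bif_ynil B.
case: (EDG_cons_cases lam a b x y) => e.
- have [F [vx [vy B]]] : exists F vx vy, Bif lam x y F vx vy.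
    by apply: IHn => /=; lia.
  by exists [:: LNode a F], (0%N :: vx), (0%N :: vy); apply: Bif_sub e B.
- have [F [vx [vy B]]] : exists F vx vy, Bif lam (a :: x) y F vx vy.
    by apply: IHn => /=; lia.
  by exists [:: LNode b F], (0%N :: vx), (0%N :: vy); apply: Bif_ins e B.
- have [F [vx [vy B]]] : exists F vx vy, Bif lam x (b :: y) F vx vy.
    by apply: IHn => /=; lia.
  by exists [:: LNode a F], (0%N :: vx), (0%N :: vy); apply: Bif_del e B.
- exists [:: chain a x; chain b y], (0%N :: nseq (size x) 0%N), (1%N :: nseq (size y) 0%N).
  exact: Bif_giveup e.
Qed.

Lemma label_chain a x : label (chain a x) = a.
Proof. by case: x. Qed.

Lemma labels_at_chain a x :
  labels_at (children (chain a x)) (nseq (size x) 0%N) = Some x.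
Proof. by elim: x a => [|b x IHx] a //=; rewrite IHx /= label_chain. Qed.

Lemma tree_size_chain a x : tree_size (children (chain a x)) = size x.
Proof. by elim: x a => [|b x IHx] a //=; rewrite tree_size_cons IHx addn0. Qed.

Lemma Bif_error_le x y F vx vy : Bif lam x y F vx vy ->
  exists Lx Ly, [/\ labels_at F vx = Some Lx, labels_at F vy = Some Ly,
    (size x <= size Lx)%N, (size y <= size Ly)%N &
    (AED x Lx)%:R + (AED y Ly)%:R + lam * (tree_size F)%:R <= EDG lam x y].
Proof.
have tree_size1 w F' : tree_size [:: LNode w F'] = (tree_size F').+1.
  by rewrite tree_size_cons addn0.
have labels_at1 w F' v :
  labels_at [:: LNode w F'] (0%N :: v) = omap (cons w) (labels_at F' v) by [].
elim=> {x y F vx vy}.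
- by exists [::], [::]; rewrite AED_refl EDG_nil_l mulr0 !addr0.
- move=> b y F vx vy _ [Lx [Ly [Fx Fy _ le_y le_err]]].
  exists [::], (b :: Ly); split=> //=; first by rewrite Fy.
  have := AED_cons b le_y; rewrite -(ler_nat R) AED_refl => le_AED.
  rewrite EDG_nil_l /= in le_err *; rewrite tree_size1 !mulr_natS.
  by have := ler0n R (AED [::] Lx); lra.
- move=> a x F vx vy _ [Lx [Ly [Fx Fy le_x _ le_err]]].
  exists (a :: Lx), [::]; split=> //=; first by rewrite Fx.
  have := AED_cons a le_x; rewrite -(ler_nat R) AED_refl => le_AED.
  rewrite EDG_nil_r /= in le_err *; rewrite tree_size1 !mulr_natS.
  by have := ler0n R (AED [::] Ly); lra.
- move=> a b x y F vx vy e _ [Lx [Ly [Fx Fy le_x le_y le_err]]].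
  exists (a :: Lx), (a :: Ly); rewrite !labels_at1 Fx Fy; split=> //.
  have := AED_cons a le_x; have := AED_cons_sub a b le_y; rewrite -!(ler_nat R) natrD.
  by rewrite tree_size1 mulr_natS e; lra.
- move=> a b x y F vx vy e _ [Lx [Ly [Fx Fy le_x le_y le_err]]].
  exists (b :: Lx), (b :: Ly); rewrite !labels_at1 Fx Fy; split=> //; first exact: leqW.
  have := AED_cons_ins b le_x; have := AED_cons b le_y; rewrite -!(ler_nat R) natrD.
  by rewrite tree_size1 mulr_natS e ED_nil_l; lra.
- move=> a b x y F vx vy e _ [Lx [Ly [Fx Fy le_x le_y le_err]]].
  exists (a :: Lx), (a :: Ly); rewrite !labels_at1 Fx Fy; split=> //; first exact: leqW.
  have := AED_cons a le_x; have := AED_cons_ins a le_y; rewrite -!(ler_nat R) natrD.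
  by rewrite tree_size1 mulr_natS e ED_nil_r; lra.
- move=> a b x y e; exists (a :: x), (b :: y).
  rewrite e /= !labels_at_chain !label_chain !AED_refl !tree_size_cons !tree_size_chain.
  by split=> //; rewrite addn0 natrD mulrDr !mulr_natS; lra.
Qed.

End BuildBifurcation.

Theorem theorem4 (A : finType) (R : realFieldType) (x y : seq (seq A)) (lam : R) :
  0 <= lam ->
  (* every labeled summary tree of {x, y} has error at least EDG(x, y, lam) *)
  (forall (F : seq (ltree A)) (vx vy : seq nat),
      summary_tree_of x y F vx vy -> EDG lam x y <= error lam x y F vx vy) /\
  (* BuildBifurcation(x, y, lam) produces a tree *)
  (exists (F : seq (ltree A)) (vx vy : seq nat), Bif lam x y F vx vy) /\
  (* and any tree it produces is a summary tree of {x, y} with error EDG(x, y, lam) *)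
  (forall (F : seq (ltree A)) (vx vy : seq nat), Bif lam x y F vx vy ->
      summary_tree_of x y F vx vy /\ error lam x y F vx vy = EDG lam x y).
Proof.
move=> lam_ge0; split; [|split].
- by move=> F vx vy; apply: EDG_le_error.
- exact: Bif_exists.
move=> F vx vy B; have [Lx [Ly [Fx Fy le_x le_y le_err]]] := Bif_error_le B.
have T : summary_tree_of x y F vx vy by exists Lx, Ly.
split=> //; apply/le_anti/andP; split; last exact: EDG_le_error.
by rewrite /error /L_T Fx Fy.
Qed.
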